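(* Let $\mathscr C$ be a class of finite groups and $G$ a nontrivial finite group. Then $G\in\mathscr C^{**}$ if and only if $G/\mathrm{Rad}(G)$ is isomorphic to a nonempty direct product of finite simple groups belonging to $\mathscr C$.
   Context: A class of finite groups is a nonempty collection of finite groups closed under isomorphism. The dual class $\mathscr C^*$ is the class of finite groups $G$ such that every normal subgroup $H$ of $G$ with $G/H\in\mathscr C$ satisfies $H=G$; $\mathscr C^{**}=(\mathscr C^* )^*$. For a nontrivial finite group $G$, its Baer radical $\mathrm{Rad}(G)$ is the intersection of all maximal normal subgroups of $G$ (normal subgroups $H\ne G$ with $G/H$ simple). *)

From HB Require Import structures.
From mathcomp Require Import all_boot all_fingroup all_solvable.
Set Implicit Arguments. Unset Strict Implicit. Unset Printing Implicit Defensive.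
Local Open Scope group_scope.

Definition group_class := forall gT : finGroupType, {group gT} -> Prop.

Definition iso_closed (C : group_class) : Prop :=
  forall (gT hT : finGroupType) (G : {group gT}) (H : {group hT}),
    G \isog H -> C gT G -> C hT H.

Definition class_nonempty (C : group_class) : Prop :=
  exists (gT : finGroupType) (G : {group gT}), C gT G.

Definition dual_class (C : group_class) : group_class :=
  fun gT G => forall H : {group gT}, H <| G -> C _ (G / H)%G -> H = G.

Definition baer_rad (gT : finGroupType) (G : {group gT}) : {group gT} :=
  (\bigcap_(H : {group gT} | [&& H <| G, H \proper G & simple (G / H)]) H)%G.

From HB Require Import structures.
From mathcomp Require Import all_boot all_fingroup all_solvable.
From Stdlib Require Import Classical.

(* A group lies in C** exactly when all of its simple quotients lie in C, since
   a simple group outside C lies in C*.  The maximal normal subgroups of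
   G/Rad(G) intersect trivially, so splitting off a minimal normal subgroup
   against a maximal normal subgroup not containing it shows, by induction,
   that G/Rad(G) is a direct product of simple groups.  Each factor is then
   isomorphic to a simple quotient of G, and every simple quotient of G to
   some factor. *)

Set Implicit Arguments. Unset Strict Implicit. Unset Printing Implicit Defensive.
Local Open Scope group_scope.

Section SimpleFactors.

Variable gT : finGroupType.
Implicit Types A B H K L M N : {group gT}.

Lemma maxnormal_mul_normal K A M :
  A <| K -> maxnormal M K K -> ~~ (A \subset M) -> A * M = K.
Proof.
move=> nsAK maxM notsAM; have nsMK := maxnormal_normal maxM.
rewrite -norm_joinEl ?(subset_trans (normal_sub nsAK)) ?normal_norm //.
apply: contraNeq notsAM => AM_neqK; have /maxgroupP[_ maxM'] := maxM.
rewrite -(maxM' (A <*> M)%G) ?joing_subl ?joing_subr //.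
have /andP[sAMK nAMK] := normalY nsAK nsMK.
by rewrite properEneq AM_neqK sAMK nAMK.
Qed.

Lemma simple_normal_isog_quotient K A N :
  A <| K -> simple A -> maxnormal N K K -> ~~ (A \subset N) -> A \isog K / N.
Proof.
move=> nsAK /simpleP[_ simA] maxN notsAN; have nsNK := maxnormal_normal maxN.
have tiNA : N :&: A = 1.
  have [AN1|AN_A] := simA (A :&: N)%G (normalGI (normal_sub nsAK) nsNK).
    by rewrite setIC AN1.
  by case/negP: notsAN; rewrite -AN_A subsetIr.
have nNA := subset_trans (normal_sub nsAK) (normal_norm nsNK).
apply: sdprod_isog; rewrite sdprodE // -(normC nNA).
exact: maxnormal_mul_normal.
Qed.

Lemma maxnormal_setI K H L :
  H <| K -> maxnormal L K K -> ~~ (H \subset L) -> maxnormal (L :&: H) H H.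
Proof.
move=> nsHK maxL notsHL; have nsLK := maxnormal_normal maxL.
have nsLHH : L :&: H <| H by rewrite setIC (normalGI (normal_sub nsHK)).
rewrite -quotient_simple //.
have nLH := subset_trans (normal_sub nsHK) (normal_norm nsLK).
rewrite (isog_simple (second_isog nLH)).
by rewrite /= -quotientMidr (maxnormal_mul_normal nsHK maxL notsHL) quotient_simple.
Qed.

Lemma normal_TI_dprod K A B :
  A <| K -> B <| K -> A :&: B = 1 -> A * B = K -> A \x B = K.
Proof.
move=> nsAK nsBK tiAB defK; rewrite dprodE //.
apply/commG1P/trivgP; rewrite -tiAB setIC commg_subI // subsetI subxx.
  by rewrite (subset_trans (normal_sub nsBK)) ?normal_norm.
by rewrite (subset_trans (normal_sub nsAK)) ?normal_norm.
Qed.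

Lemma normal_dprodr K A B H : A \x B = K -> H <| B -> H <| K.
Proof.
case/dprodP=> [[{}A {}B -> ->] defK cAB _] nsHB; have sHB := normal_sub nsHB.
have nHA : A \subset 'N(H).
  by rewrite (subset_trans _ (cent_sub H)) // (subset_trans _ (centS sHB)) // centsC.
by rewrite /normal -defK mulG_subG nHA normal_norm // (subset_trans sHB) ?mulG_subr.
Qed.

Lemma bigdprod_normal n (A : 'I_n -> {group gT}) K i :
  \big[dprod/1]_(j < n) A j = K -> A i <| K.
Proof. by rewrite (bigD1 i) //= => /dprod_normal2[]. Qed.

Lemma bigdprod_simple_isog_maxnormal n (A : 'I_n -> {group gT}) K N :
    \big[dprod/1]_(i < n) A i = K -> (forall i, simple (A i)) ->
    maxnormal N K K ->
  exists i, A i \isog K / N.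
Proof.
move=> defK simA maxN.
have [i /= notsAN | sAN] := pickP (fun i => ~~ (A i \subset N)).
  by exists i; apply: simple_normal_isog_quotient (bigdprod_normal i defK) _ _ _.
case/negP: (proper_subn (maxnormal_proper maxN)).
rewrite -(bigdprodWY defK) gen_subG; apply/bigcupsP => i _.
by apply/negbFE; apply: sAN.
Qed.

(* The hypothesis says that the maximal normal subgroups of K intersect
   trivially. *)
Lemma bigdprod_simple_of_maxnormal_sep K :
    (forall A, A <| K -> A :!=: 1 ->
       exists2 M : {group gT}, maxnormal M K K & ~~ (A \subset M)) ->
  exists n (A : 'I_n -> {group gT}),
    \big[dprod/1]_(i < n) A i = K /\ forall i, simple (A i).
Proof.
have [m] := ubnP #|K|; elim: m K => // m IHm K leKm sepK.
have [-> | ntK] := eqVneq K 1%G.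
  by exists 0, (fun _ => 1%G); split=> [|[]]; rewrite ?big_ord0.
have [A minA sAK] := minnormal_exists ntK (normG K).
have [ntA nAK] := andP (mingroupp minA).
have nsAK : A <| K by rewrite /normal sAK.
have [M maxM notsAM] := sepK A nsAK ntA; have nsMK := maxnormal_normal maxM.
have tiAM : A :&: M = 1.
  apply/eqP; apply: contraNT notsAM => ntAM; have [_ minA'] := mingroupP minA.
  rewrite -(minA' (A :&: M)%G) ?subsetIr ?subsetIl //.
  by rewrite ntAM normsI ?normal_norm.
have defK := normal_TI_dprod nsAK nsMK tiAM (maxnormal_mul_normal nsAK maxM notsAM).
have simA : simple A.
  by rewrite (isog_simple (sdprod_isog (dprodWsdC defK))) quotient_simple.
have sepM B : B <| M -> B :!=: 1 ->
    exists2 L : {group gT}, maxnormal L M M & ~~ (B \subset L).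
  move=> nsBM ntB; have [L maxL notsBL] := sepK B (normal_dprodr defK nsBM) ntB.
  exists (L :&: M)%G; last by rewrite subsetI negb_and notsBL.
  apply: maxnormal_setI nsMK maxL _; apply: contra notsBL.
  exact: subset_trans (normal_sub nsBM).
have ltMm : #|M| < m.
  exact: leq_trans (proper_card (maxnormal_proper maxM)) leKm.
have [n [B [defM simB]]] := IHm M ltMm sepM.
exists n.+1, (fun i => oapp B A (unlift ord0 i)); split=> [|i].
  rewrite big_ord_recl unlift_none -defK -defM.
  by under eq_bigr do rewrite liftK.
by case: (unlift ord0 i).
Qed.

End SimpleFactors.

Section BaerRadical.

Variable gT : finGroupType.
Implicit Types G H M : {group gT}.

Lemma baer_rad_sub_maxnormal G M : maxnormal M G G -> baer_rad G \subset M.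
Proof.
move=> maxM; have nsMG := maxnormal_normal maxM.
by apply: bigcap_inf; rewrite nsMG (maxnormal_proper maxM) quotient_simple.
Qed.

Lemma baer_rad_normal G : G :!=: 1 -> baer_rad G <| G.
Proof.
case/ex_maxnormal_ntrivg=> M maxM.
rewrite /normal (subset_trans (baer_rad_sub_maxnormal maxM) (maxnormal_sub maxM)).
by apply/norms_bigcap/bigcapsP => H /and3P[/normal_norm].
Qed.

Lemma baer_rad_proper G : G :!=: 1 -> baer_rad G \proper G.
Proof.
case/ex_maxnormal_ntrivg=> M maxM.
exact: sub_proper_trans (baer_rad_sub_maxnormal maxM) (maxnormal_proper maxM).
Qed.

Lemma maxnormal_quotient H G M :
    H <| G -> H \subset M -> M <| G ->
  maxnormal (M / H) (G / H) (G / H) = maxnormal M G G.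
Proof.
move=> nsHG sHM nsMG.
rewrite -!quotient_simple ?quotient_normal //.
exact: isog_simple (third_isog sHM nsHG nsMG).
Qed.

Lemma maxnormal_quotient_lift H G (N : {group coset_of H}) :
    H <| G -> maxnormal N (G / H) (G / H) ->
  exists2 M : {group gT}, maxnormal M G G & (G / H) / N \isog G / M.
Proof.
move=> nsHG maxN.
have [M defN sHM nsMG] := inv_quotientN nsHG (maxnormal_normal maxN).
rewrite defN (maxnormal_quotient nsHG) // in maxN.
by exists M; rewrite // defN; apply: third_isog.
Qed.

Lemma quotient_baer_rad_maxnormal_sep G :
    G :!=: 1 -> forall A : {group coset_of (baer_rad G)},
    A <| G / baer_rad G -> A :!=: 1 ->
  exists2 N : {group coset_of (baer_rad G)},
    maxnormal N (G / baer_rad G) (G / baer_rad G) & ~~ (A \subset N).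
Proof.
move=> ntG A nsA ntA; have nsRG := baer_rad_normal ntG.
have [N /andP[maxN notsAN] | sAmax] := pickP [pred N : {group coset_of (baer_rad G)}
    | maxnormal N (G / baer_rad G) (G / baer_rad G) && ~~ (A \subset N)].
  by exists N.
case/negP: ntA; have [A0 defA _ nsA0G] := inv_quotientN nsRG nsA.
rewrite defA quotientS1 // [baer_rad G]/baer_rad /=.
apply/bigcapsP => M /and3P[nsMG _ simGM].
have maxM : maxnormal M G G by rewrite -quotient_simple.
have sRM := baer_rad_sub_maxnormal maxM.
have nRA0 := subset_trans (normal_sub nsA0G) (normal_norm nsRG).
rewrite -(quotientSGK nRA0 sRM) -defA.
by have := sAmax (M / baer_rad G)%G; rewrite /= maxnormal_quotient // maxM => /negbFE.
Qed.

End BaerRadical.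

(* For simple groups the dual class is the complement of C, so C** consists of
   the groups all of whose simple quotients lie in C. *)
Lemma dual_dual_classP (C : group_class) (gT : finGroupType) (G : {group gT}) :
    iso_closed C ->
  dual_class (dual_class C) G <->
  (forall M : {group gT}, maxnormal M G G -> C _ (G / M)%G).
Proof.
move=> C_iso; split=> [CddG M maxM | CG H nsHG CdGH].
  have [//|notCGM] := classic (C _ (G / M)%G).
  have nsMG := maxnormal_normal maxM.
  have /simpleP[_ simGM] : simple (G / M) by rewrite quotient_simple.
  suff CdGM : dual_class C (G / M)%G.
    by have := maxnormal_proper maxM; rewrite (CddG M nsMG CdGM) properxx.
  move=> H nsH CGMH; apply: val_inj.
  have [H1 | //] := simGM H nsH.
  move: CGMH; have -> : H = 1%G by apply: val_inj.
  by move/(C_iso _ _ _ _ (isog_symr (quotient1_isog _))).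
have [//|neHG] := eqVneq H G.
have ntGH : (G / H)%G :!=: 1.
  rewrite -subG1 quotient_sub1 ?normal_norm //.
  by apply: contra neHG => sGH; apply/eqP/val_inj/eqP; rewrite eqEsubset sGH normal_sub.
have [N maxN] := ex_maxnormal_ntrivg ntGH.
have [M maxM isoM] := maxnormal_quotient_lift nsHG maxN.
have := maxnormal_proper maxN.
rewrite (CdGH N (maxnormal_normal maxN) (C_iso _ _ _ _ (isog_symr isoM) (CG M maxM))).
by rewrite properxx.
Qed.

Unset Implicit Arguments. Set Strict Implicit. Set Printing Implicit Defensive.

Theorem proposition3p7 (C : group_class) (C_iso : iso_closed C)
    (C_ne : class_nonempty C) (gT : finGroupType) (G : {group gT})
    (ntG : G :!=: 1) :
  @dual_class (dual_class C) gT G <->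
  exists (n : nat) (A : 'I_n -> {group coset_of (baer_rad G)}),
    [/\ 0 < n,
        \big[dprod/1]_(i < n) A i = G / baer_rad G &
        forall i, simple (A i) /\ C _ (A i)].
Proof.
have nsRG := baer_rad_normal ntG.
rewrite dual_dual_classP //; split=> [CG | [n [A [_ defGR simCA]]] M maxM].
  have [n [A [defGR simA]]] :=
    bigdprod_simple_of_maxnormal_sep (quotient_baer_rad_maxnormal_sep ntG).
  exists n, A; split=> // [|i].
    case: n A defGR {simA} => // A; rewrite big_ord0 => /esym/trivgP.
    rewrite quotient_sub1 ?normal_norm // => sGR.
    by case/negP: (proper_subn (baer_rad_proper ntG)).
  have nsAGR := bigdprod_normal i defGR.
  have /simpleP[ntA _] := simA i.
  have [N maxN notsAN] := quotient_baer_rad_maxnormal_sep ntG nsAGR ntA.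
  have [M maxM isoM] := maxnormal_quotient_lift nsRG maxN.
  split=> //; apply: C_iso (CG M maxM); rewrite isog_sym.
  exact: isog_trans (simple_normal_isog_quotient nsAGR (simA i) maxN notsAN) isoM.
have nsMG := maxnormal_normal maxM; have sRM := baer_rad_sub_maxnormal maxM.
have maxMR : maxnormal (M / baer_rad G) (G / baer_rad G) (G / baer_rad G).
  by rewrite maxnormal_quotient.
have [i isoA] := bigdprod_simple_isog_maxnormal defGR (fun i => (simCA i).1) maxMR.
exact: C_iso (isog_trans isoA (third_isog sRM nsRG nsMG)) (simCA i).2.
Qed.
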